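(* Let $(G,+)$ be a Polish group and let $P \subseteq G$ be a perfect set. Then there is a perfect set $Q \subseteq P$ which is skew.
   Context: The group $(G,+)$ is written additively (not necessarily abelian), with $x-y=x+(-y)$. A set is perfect if it is closed and has no isolated points. A set $Z \subseteq G$ is skew if for all $x,y,v,w\in Z$: if $x\neq y$, $v\neq w$ and $\{x,y\}\neq\{v,w\}$, then $x-y\neq v-w$. *)

From HB Require Import structures.
From mathcomp Require Import all_boot all_order all_algebra.
From mathcomp Require Import all_classical all_reals all_analysis.
From Stdlib Require Import Reals.
Set Implicit Arguments. Unset Strict Implicit. Unset Printing Implicit Defensive.
Local Open Scope classical_set_scope.

Definition is_metric (T : Type) (d : T -> T -> R) : Prop :=
  (forall x y, Rle 0 (d x y)) /\
  (forall x y, d x y = 0%R <-> x = y) /\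
  (forall x y, d x y = d y x) /\
  (forall x y z, Rle (d x z) (Rplus (d x y) (d y z))).

Definition metric_induces_topology (T : topologicalType) (d : T -> T -> R) : Prop :=
  forall (x : T) (U : set T),
    nbhs x U <-> exists e : R, Rlt 0 e /\ (forall y, Rlt (d x y) e -> U y).

Definition metric_complete (T : topologicalType) (d : T -> T -> R) : Prop :=
  forall u : nat -> T,
    (forall e : R, Rlt 0 e -> exists N : nat,
        forall m n : nat, (N <= m)%N -> (N <= n)%N -> Rlt (d (u m) (u n)) e) ->
    exists l : T, u @ \oo --> l.

Definition completely_metrizable (T : topologicalType) : Prop :=
  exists d : T -> T -> R,
    is_metric d /\ metric_induces_topology d /\ metric_complete d.

Definition separable_space (T : topologicalType) : Prop :=
  exists D : set T, countable D /\ closure D = [set: T].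

Definition polish_space (T : topologicalType) : Prop :=
  separable_space T /\ completely_metrizable T.

Definition is_topological_group (T : topologicalType)
    (add : T -> T -> T) (opp : T -> T) (zero : T) : Prop :=
  (forall x y z, add x (add y z) = add (add x y) z) /\
  (forall x, add zero x = x) /\ (forall x, add x zero = x) /\
  (forall x, add (opp x) x = zero) /\ (forall x, add x (opp x) = zero) /\
  continuous (fun p : T * T => add p.1 p.2) /\ continuous opp.

Definition skew_set (T : Type) (add : T -> T -> T) (opp : T -> T) (Z : set T) : Prop :=
  forall x y v w, Z x -> Z y -> Z v -> Z w ->
    x <> y -> v <> w -> ~ ((x = v /\ y = w) \/ (x = w /\ y = v)) ->
    add x (opp y) <> add v (opp w).

(* A finite skew set F in P can be enlarged by a point q of P
   arbitrarily close to any p in F: up to the symmetries of a collision, the new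
   collisions are q - y = v - w, which has at most one solution q, and
   q - y = v - q, which fails at q = p by skewness of F and hence near p by
   continuity.  Skewness of a finite set is moreover robust: for some r > 0 any
   four points within r of a non-degenerate pattern of F have distinct
   differences.  Iterating gives skew sets F_0 <= F_1 <= ... in P with radii
   r_(n+1) <= r_n / 4, every point of F_n having a new point of F_(n+1) within
   r_n / 4 and every point of F_(n+1) lying within r_n / 4 of F_n.  The closure
   Q of their union has no isolated points, and a collision in Q would lie
   within r_n of a non-degenerate pattern of F_n for large n, contradicting
   robustness. *)

From HB Require Import structures.
From mathcomp Require Import all_boot all_order all_algebra.
From mathcomp Require Import all_classical all_reals all_analysis.
From Stdlib Require Import Reals Lra.
Set Implicit Arguments.
Unset Strict Implicit.
Unset Printing Implicit Defensive.
Local Open Scope classical_set_scope.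

Lemma near_all_in {T : Type} {I : eqType} (F : set_system T) {FF : Filter F}
    (s : seq I) (P : I -> T -> Prop) :
  (forall i, i \in s -> \forall x \near F, P i x) ->
  \forall x \near F, forall i, i \in s -> P i x.
Proof.
elim: s => [|i s IHs] sP; first exact: nearW.
have Pi := sP i (mem_head i s).
have Ps := IHs (fun j js => sP j ltac:(by rewrite in_cons js orbT)).
near=> x => j; rewrite in_cons => /orP[/eqP->|js].
- exact: (near Pi x).
- exact: (near Ps x).
Unshelve. all: by end_near.
Qed.

Lemma cvg_neq {T : Type} {U : topologicalType} (F : set_system T) (f g : T -> U)
    (a b : U) {FF : Filter F} : hausdorff_space U -> f @ F --> a -> g @ F --> b ->
  a != b -> \forall x \near F, f x != g x.
Proof.
rewrite open_hausdorff => sepU fa gb /sepU[[A B] /=].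
rewrite !inE => -[aA bB] [oA oB AB0].
have fA : \forall x \near F, A (f x) := fa A (open_nbhs_nbhs (conj oA aA)).
have gB : \forall x \near F, B (g x) := gb B (open_nbhs_nbhs (conj oB bB)).
near=> x; apply/eqP => fg.
have : (A `&` B) (f x) by split; [exact: (near fA x)|rewrite fg; exact: (near gB x)].
by rewrite AB0.
Unshelve. all: by end_near.
Qed.

Lemma dnbhs_neq_unique {T U : topologicalType} (f g : T -> U) (p : T) :
  hausdorff_space U -> {for p, continuous f} -> {for p, continuous g} ->
  (forall q q', f q = g q -> f q' = g q' -> q = q') ->
  \forall q \near p^', f q != g q.
Proof.
move=> sepU fp gp unique; have [fgp|fgp] := eqVneq (f p) (g p).
- near=> q; apply/negP => /eqP /(unique _ _)/(_ fgp) qp.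
  suff: q != p by rewrite qp eqxx.
  near: q; exact: nbhs_dnbhs_neq.
- exact: nbhs_dnbhs (cvg_neq sepU fp gp fgp).
Unshelve. all: by end_near.
Qed.

Lemma perfect_closure (T : topologicalType) (D : set T) :
  D `<=` limit_point D -> perfect_set (closure D).
Proof.
move=> Dlim; split; first exact: closed_closure.
apply/seteqP; split=> x.
  by move/subset_limit_point; rewrite -(closure_id _).1 //; exact: closed_closure.
move=> Dx U; rewrite nbhsE => -[V [oV Vx] VU].
have [z [Dz Vz]] := Dx V (open_nbhs_nbhs (conj oV Vx)).
have [zx|zx] := eqVneq z x.
  rewrite zx in Dz; have [y [yx Dy Vy]] := Dlim x Dz V (open_nbhs_nbhs (conj oV Vx)).
  by exists y; split; [exact: yx|exact: subset_closure|exact: VU].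
by exists z; split; [exact: zx|exact: subset_closure|exact: VU].
Qed.

Definition distinct_pairs {T : Type} (x y v w : T) :=
  [/\ x <> y, v <> w & ~ ((x = v /\ y = w) \/ (x = w /\ y = v))].

Lemma distinct_pairs_sym {T : Type} (x y v w : T) :
  distinct_pairs x y v w -> distinct_pairs v w x y.
Proof.
case=> nxy nvw npair; split=> [//|//|[[vx wy]|[vy wx]]]; apply: npair.
  exact: or_introl (conj (esym vx) (esym wy)).
exact: or_intror (conj (esym wx) (esym vy)).
Qed.

Lemma distinct_pairs_rev {T : Type} (x y v w : T) :
  distinct_pairs x y v w -> distinct_pairs y x w v.
Proof.
case=> nxy nvw npair; split=> [yx|wv|[[yw xv]|[yv xw]]]; [exact: nxy|exact: nvw|..].
- exact: npair (or_introl (conj xv yw)).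
- exact: npair (or_intror (conj xw yv)).
Qed.

Section TopologicalGroup.
Variables (G : topologicalType) (add : G -> G -> G) (opp : G -> G) (zero : G).
Hypothesis HG : is_topological_group add opp zero.

Local Notation sub x y := (add x (opp y)).
Local Notation skew Z := (skew_set add opp Z).

Let addA x y z : add x (add y z) = add (add x y) z. Proof. by case: HG. Qed.
Let add0x x : add zero x = x. Proof. by case: HG => _ []. Qed.
Let addx0 x : add x zero = x. Proof. by case: HG => _ [_ []]. Qed.
Let addNx x : add (opp x) x = zero. Proof. by case: HG => _ [_ [_ []]]. Qed.
Let addxN x : add x (opp x) = zero. Proof. by case: HG => _ [_ [_ [_ []]]]. Qed.

Lemma gaddrI a x y : add a x = add a y -> x = y.
Proof. by move=> e; rewrite -[x]add0x -[y]add0x -(addNx a) -!addA e. Qed.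

Lemma gaddIr a x y : add x a = add y a -> x = y.
Proof. by move=> e; rewrite -[x]addx0 -[y]addx0 -(addxN a) !addA e. Qed.

Lemma goppr_inj : injective opp.
Proof. by move=> x y e; apply: (gaddrI (a := opp x)); rewrite addNx e addNx. Qed.

Lemma gsubrI a x y : sub a x = sub a y -> x = y.
Proof. by move=> /gaddrI /goppr_inj. Qed.

Lemma gsubIr a x y : sub x a = sub y a -> x = y.
Proof. exact: gaddIr. Qed.

Lemma gopprB x y : opp (sub x y) = sub y x.
Proof.
apply: (gaddrI (a := sub x y)); rewrite addxN -addA [add (opp y) _]addA addNx add0x.
by rewrite addxN.
Qed.

Lemma cvg_gsub {T : Type} (F : set_system T) {FF : Filter F} (f g : T -> G) a b :
  f @ F --> a -> g @ F --> b -> (fun t => sub (f t) (g t)) @ F --> sub a b.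
Proof.
case: HG => _ [_ [_ [_ [_ [addC oppC]]]]] fa gb.
exact: (continuous2_cvg _ (addC (a, opp b)) fa (continuous_cvg _ (oppC b) gb)).
Qed.

Lemma skew_cons (F : seq G) q : skew [set` F] ->
  (forall y, y \in F -> forall v, v \in F -> forall w, w \in F -> sub q y <> sub v w) ->
  (forall y, y \in F -> forall v, v \in F -> y <> v -> sub q y <> sub v q) ->
  skew [set` q :: F].
Proof.
move=> skF qyvw qyvq.
(* Collisions are invariant under (x, y, v, w) -> (v, w, x, y) and
   (x, y, v, w) -> (y, x, w, v), so q may be assumed to come first. *)
have inF z : z \in q :: F -> z != q -> z \in F.
  by rewrite in_cons => /orP[/eqP->|//]; rewrite eqxx.
have headq y v w : y \in q :: F -> v \in q :: F -> w \in q :: F ->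
    distinct_pairs q y v w -> sub q y <> sub v w.
  move=> Zy Zv Zw [nqy nvw npair] e.
  have yF : y \in F by apply: (inF y Zy); apply/eqP => yq; exact: nqy (esym yq).
  have [vq|/(inF _ Zv) vF] := eqVneq v q.
    rewrite vq in e npair.
    exact: npair (or_introl (conj erefl (gsubrI e))).
  have [wq|/(inF _ Zw) wF] := eqVneq w q; last exact: qyvw y yF v vF w wF e.
  rewrite wq in npair e.
  have yv : y <> v by move=> yv; apply: npair; right.
  exact: qyvq y yF v vF yv e.
have headq_rev x v w : x \in q :: F -> v \in q :: F -> w \in q :: F ->
    distinct_pairs x q v w -> sub x q <> sub v w.
  move=> Zx Zv Zw D e; apply: (headq _ _ _ Zx Zw Zv (distinct_pairs_rev D)).
  by rewrite -gopprB e gopprB.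
move=> x y v w Zx Zy Zv Zw nxy nvw npair e.
have D : distinct_pairs x y v w by [].
have [xq|/(inF _ Zx) xF] := eqVneq x q.
  by rewrite xq in D e; exact: (headq _ _ _ Zy Zv Zw D e).
have [yq|/(inF _ Zy) yF] := eqVneq y q.
  by rewrite yq in D e; exact: (headq_rev _ _ _ Zx Zv Zw D e).
have [vq|/(inF _ Zv) vF] := eqVneq v q.
  by rewrite vq in D e; exact: (headq _ _ _ Zw Zx Zy (distinct_pairs_sym D) (esym e)).
have [wq|/(inF _ Zw) wF] := eqVneq w q.
  by rewrite wq in D e; exact: (headq_rev _ _ _ Zv Zx Zy (distinct_pairs_sym D) (esym e)).
exact: skF xF yF vF wF nxy nvw npair e.
Qed.

Hypothesis sepG : hausdorff_space G.

Lemma near_skew_cons (F : seq G) p : skew [set` F] -> p \in F ->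
  \forall q \near p^', skew [set` q :: F].
Proof.
move=> skF pF.
have fresh : \forall q \near p^',
    forall y, y \in F -> forall v, v \in F -> forall w, w \in F -> sub q y <> sub v w.
  apply: near_all_in => y _; apply: near_all_in => v _; apply: near_all_in => w _.
  have unique q q' : sub q y = sub v w -> sub q' y = sub v w -> q = q'.
    by move=> e e'; apply: (gsubIr (a := y)); rewrite e e'.
  apply: filterS (dnbhs_neq_unique sepG (cvg_gsub cvg_id (cvg_cst y)) (cvg_cst _) unique).
  by move=> q /eqP.
have cross : \forall q \near p^',
    forall y, y \in F -> forall v, v \in F -> y <> v -> sub q y <> sub v q.
  apply: near_all_in => y yF; apply: near_all_in => v vF.
  have [<-|yv] := eqVneq y v; first by apply: nearW => q /(_ erefl).
  have pyvp : sub p y != sub v p.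
    apply/eqP => e; suff yv' : y = v by rewrite yv' eqxx in yv.
    have [py|py] := eqVneq p y; first by rewrite py in e; exact: gsubIr e.
    have [pv|pv] := eqVneq p v; first by rewrite pv in e; exact: gsubrI e.
    exfalso; apply: (skF p y v p pF yF vF pF _ _ _ e).
    - exact/eqP.
    - by apply/eqP; rewrite eq_sym.
    - by move=> -[[/eqP]|[_ /eqP]]; [rewrite (negPf pv)|rewrite (negPf yv)].
  apply: nbhs_dnbhs.
  apply: filterS (cvg_neq sepG (cvg_gsub cvg_id (cvg_cst y))
                           (cvg_gsub (cvg_cst v) cvg_id) pyvp).
  by move=> q /eqP.
near=> q; apply: skew_cons skF _ _; near: q; [exact: fresh|exact: cross].
Unshelve. all: by end_near.
Qed.

End TopologicalGroup.

Local Open Scope R_scope.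

Definition small_radii : set_system R :=
  [set Q | exists e, 0 < e /\ forall r, 0 < r -> r < e -> Q r].

#[global] Instance small_radii_filter : Filter small_radii.
Proof.
split.
- by exists 1; split; [lra|].
- move=> A B [e [e0 eA]] [e' [e'0 e'B]].
  exists (Rmin e e'); split=> [|r r0 re]; first exact: Rmin_pos.
  have := Rmin_l e e'; have := Rmin_r e e'.
  by split; [apply: eA|apply: e'B]; lra.
- move=> A B AB [e [e0 eA]]; exists e; split=> // r r0 re.
  exact/AB/eA.
Qed.

Lemma small_radii_lt e : 0 < e -> \forall r \near small_radii, r < e.
Proof. by move=> e0; exists e; split. Qed.

Lemma small_radii_witness (Q : R -> Prop) :
  (\forall r \near small_radii, Q r) -> exists r, 0 < r /\ Q r.
Proof. by move=> [e [e0 eQ]]; exists (e / 2); split; [|apply: eQ]; lra. Qed.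

Section MetricSpace.
Variables (G : topologicalType) (d : G -> G -> R).
Hypotheses (dm : is_metric d) (dtop : metric_induces_topology d).

Let d_eq0 x y : d x y = 0 <-> x = y. Proof. by case: dm => _ []. Qed.
Let d_sym x y : d x y = d y x. Proof. by case: dm => _ [_ []]. Qed.
Let d_tri x y z : d x z <= d x y + d y z. Proof. by case: dm => _ [_ [_]]. Qed.
Let d_xx x : d x x = 0. Proof. exact/d_eq0. Qed.
Let d_gt0 x y : x <> y -> 0 < d x y.
Proof.
move=> xy; case: dm => /(_ x y) /Rle_lt_or_eq_dec [//|/esym /d_eq0 //] _.
Qed.

Lemma ball_nbhs x e : 0 < e -> nbhs x [set y | d x y < e].
Proof. by move=> e0; apply/dtop; exists e. Qed.

Lemma near_small_ball x (U : set G) : nbhs x U ->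
  \forall r \near small_radii, forall y, d x y < r -> U y.
Proof. by move=> /dtop[e [e0 eU]]; exists e; split=> // r _ re y xy; apply: eU; lra. Qed.

Lemma hausdorff_of_metric : hausdorff_space G.
Proof.
move=> p q clpq; apply: contrapT => /d_gt0 pq.
have e0 : 0 < d p q / 2 by lra.
have [z [/= pz qz]] := clpq _ _ (ball_nbhs p e0) (ball_nbhs q e0).
by have := d_tri p z q; rewrite (d_sym z q); lra.
Qed.

Section MetricGroup.
Variables (add : G -> G -> G) (opp : G -> G) (zero : G).
Hypothesis HG : is_topological_group add opp zero.

Local Notation sub x y := (add x (opp y)).
Local Notation skew Z := (skew_set add opp Z).

Lemma near_small_sub a b (N : set G) : nbhs (sub a b) N ->
  \forall r \near small_radii, forall x y, d a x < r -> d b y < r -> N (sub x y).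
Proof.
move=> /(cvg_gsub HG cvg_fst cvg_snd) [[A B] /= [aA bB] AB].
near=> r => x y dax dby; apply: (AB (x, y)); split=> /=.
- exact: (near (near_small_ball aA) r _ x dax).
- exact: (near (near_small_ball bB) r _ y dby).
Unshelve. all: by end_near.
Qed.

Lemma near_small_sub_neq a b c e : sub a b <> sub c e ->
  \forall r \near small_radii, forall x y v w,
    d a x < r -> d b y < r -> d c v < r -> d e w < r -> sub x y <> sub v w.
Proof.
move=> /eqP; have := hausdorff_of_metric; rewrite open_hausdorff => sepG.
move=> /sepG [[A B] /=]; rewrite !inE => -[abA ceB] [oA oB AB0].
have nA := near_small_sub (open_nbhs_nbhs (conj oA abA)).
have nB := near_small_sub (open_nbhs_nbhs (conj oB ceB)).
near=> r => x y v w dax dby dcv dew xyvw.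
have : (A `&` B) (sub x y).
  split; first exact: (near nA r _ x y dax dby).
  by rewrite xyvw; exact: (near nB r _ v w dcv dew).
by rewrite AB0.
Unshelve. all: by end_near.
Qed.

Definition robustly_skew (F : seq G) (r : R) :=
  forall a, a \in F -> forall b, b \in F -> forall c, c \in F -> forall e, e \in F ->
  distinct_pairs a b c e -> forall x y v w,
    d a x < r -> d b y < r -> d c v < r -> d e w < r -> sub x y <> sub v w.

Lemma near_robustly_skew (F : seq G) : skew [set` F] ->
  \forall r \near small_radii, robustly_skew F r.
Proof.
move=> skF; rewrite /robustly_skew.
apply: near_all_in => a aF; apply: near_all_in => b bF.
apply: near_all_in => c cF; apply: near_all_in => e eF.
have [[ab ce pairs]|nD] := pselect (distinct_pairs a b c e).
  apply: filterS (near_small_sub_neq (skF a b c e aF bF cF eF ab ce pairs)).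
  by move=> r sep _; exact: sep.
by apply: nearW => r /nD.
Qed.

Variable P : set G.
Hypothesis HP : perfect_set P.

Lemma exists_skew_partner (F : seq G) p e : [set` F] `<=` P -> skew [set` F] ->
  p \in F -> 0 < e -> exists q, [/\ P q, q <> p, d p q < e & skew [set` q :: F]].
Proof.
move=> FP skF pF e0.
have limP : limit_point P p by rewrite HP.2; exact: FP.
have near_good : \forall q \near p^', d p q < e /\ skew [set` q :: F].
  near=> q; split.
  - by near: q; apply: nbhs_dnbhs; exact: ball_nbhs.
  - near: q; apply: (near_skew_cons HG hausdorff_of_metric skF pF).
have [q [qp Pq good]] := limP _ near_good.
by have [dpq skq] := good qp; exists q; split=> //; exact/eqP.
Unshelve. all: by end_near.
Qed.

Lemma extend_with_partners (l F : seq G) e : 0 < e -> {subset l <= F} ->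
  [set` F] `<=` P -> skew [set` F] ->
  exists F' : seq G, [/\ {subset F <= F'}, [set` F'] `<=` P, skew [set` F'],
    forall p, p \in l -> exists2 q, q \in F' & q <> p /\ d p q < e
  & forall z, z \in F' -> z \in F \/ exists2 a, a \in l & d z a < e].
Proof.
move=> e0; elim: l F => [|p l IHl] F lF FP skF.
  by exists F; split=> // z zF; left.
have pF : p \in F := lF p (mem_head p l).
have [q [Pq qp dpq skq]] := exists_skew_partner FP skF pF e0.
have lqF : {subset l <= q :: F}.
  by move=> z zl; rewrite in_cons lF ?orbT // in_cons zl orbT.
have qFP : [set` q :: F] `<=` P by move=> z /=; rewrite in_cons => /orP[/eqP->|/FP].
have [F' [FF' F'P skF' part approx]] := IHl (q :: F) lqF qFP skq.
exists F'; split=> //.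
- by move=> z zF; apply: FF'; rewrite in_cons zF orbT.
- move=> p'; rewrite in_cons => /orP[/eqP->|/part//].
  by exists q; [apply: FF'; exact: mem_head|].
- move=> z /approx[|[a al za]]; last by right; exists a; rewrite // in_cons al orbT.
  rewrite in_cons => /orP[/eqP->|zF]; last by left.
  by right; exists p; [exact: mem_head|rewrite d_sym].
Qed.

Record stage := Stage { pts : seq G; rad : R }.

Definition admissible (s : stage) := [/\ [set` pts s] `<=` P, skew [set` pts s],
  0 < rad s & robustly_skew (pts s) (rad s)].

Definition refines (s t : stage) := [/\ {subset pts s <= pts t}, rad t <= rad s / 4,
  forall p, p \in pts s -> exists2 q, q \in pts t & q <> p /\ d p q < rad s / 4
  & forall z, z \in pts t -> exists2 a, a \in pts s & d z a < rad s / 4].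

Lemma refine_stage s : admissible s -> exists t, admissible t /\ refines s t.
Proof.
case=> FP skF r0 _; have e0 : 0 < rad s / 4 by lra.
have [F' [FF' F'P skF' part approx]] := extend_with_partners e0 (fun _ h => h) FP skF.
have [r [r0' [rs robust]]] : exists r, 0 < r /\ r < rad s / 4 /\ robustly_skew F' r.
  apply: small_radii_witness; near=> r; split.
  - by near: r; exact: small_radii_lt.
  - by near: r; apply: (near_robustly_skew skF').
exists (Stage F' r); split; first by split.
split=> //=; first lra.
by move=> z /approx[zF|//]; exists z => //; rewrite d_xx; lra.
Unshelve. all: by end_near.
Qed.

Lemma exists_refining_chain p0 : P p0 -> exists s : nat -> stage,
  [/\ p0 \in pts (s 0%nat), forall n, admissible (s n) & forall n, refines (s n) (s n.+1)].
Proof.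
move=> Pp0.
have adm0 : admissible (Stage [:: p0] 1).
  split=> /=; [by move=> z /=; rewrite inE => /eqP->| |lra|].
  - by move=> x y v w /=; rewrite !inE => /eqP-> /eqP-> _ _ /(_ erefl).
  - move=> a; rewrite inE => /eqP-> b; rewrite inE => /eqP-> c _ e _.
    by move=> [/(_ erefl)].
pose A := {s | admissible s}.
have step (x : A) : {y : A | refines (sval x) (sval y)}.
  have /cid[t [admt xt]] := refine_stage (svalP x).
  by exists (exist _ t admt).
have [f [f0 fS]] := dependent_choice step (exist _ _ adm0).
exists (fun n => sval (f n)); split=> [|n|n]; [by rewrite f0 mem_head|exact: svalP|exact: fS].
Qed.

Section Limit.
Variable s : nat -> stage.
Hypotheses (adm : forall n, admissible (s n)) (ref : forall n, refines (s n) (s n.+1)).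

Local Notation D := (\bigcup_n [set` pts (s n)]).

Let rad_gt0 n : 0 < rad (s n). Proof. by case: (adm n). Qed.

Lemma rad_le_geometric n : rad (s n) <= rad (s 0%nat) * (/ 4) ^ n.
Proof.
elim: n => [|n IHn]; first by rewrite /= Rmult_1_r; lra.
have [_ + _ _] := ref n; rewrite /= -Rmult_assoc (Rmult_comm _ (/ 4)) Rmult_assoc.
lra.
Qed.

Lemma near_rad_lt e : 0 < e -> \forall n \near \oo, rad (s n) < e.
Proof.
move=> e0; have r0 := rad_gt0 0%nat.
have q1 : Rabs (/ 4) < 1 by rewrite Rabs_pos_eq; lra.
have [N geoN] := pow_lt_1_zero _ q1 _ (Rdiv_lt_0_compat _ _ e0 r0).
exists N => // n /= /leP Nn; have := geoN n Nn.
rewrite Rabs_pos_eq; last by apply: pow_le; lra.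
move=> geo; apply: Rle_lt_trans (rad_le_geometric n) _.
have := Rmult_lt_compat_l _ _ _ r0 geo.
by replace (rad (s 0%nat) * (e / rad (s 0%nat))) with e by (field; lra).
Qed.

Lemma pts_subset n k : {subset pts (s n) <= pts (s (n + k)%nat)}.
Proof.
elim: k => [|k IHk] z; first by rewrite addn0.
by move/IHk; rewrite addnS; have [+ _ _ _] := ref (n + k)%nat; apply.
Qed.

(* The bound telescopes because rad (s m.+1) <= rad (s m) / 4. *)
Lemma pts_approx n k z : z \in pts (s (n + k)%nat) ->
  exists2 a, a \in pts (s n) & d z a <= (rad (s n) - rad (s (n + k)%nat)) / 2.
Proof.
elim: k z => [|k IHk] z; first by rewrite addn0 => zn; exists z; rewrite // d_xx; lra.
rewrite addnS; have [_ rk _ approx] := ref (n + k)%nat.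
move=> /approx[b /IHk[a an ba] zb]; exists a => //.
by have := d_tri z b a; have := rad_gt0 (n + k)%nat; lra.
Qed.

Lemma closure_approx n x : closure D x -> exists2 a, a \in pts (s n) & d a x < rad (s n).
Proof.
move=> Dx; have r0 : 0 < rad (s n) / 2 by have := rad_gt0 n; lra.
have [z [[k _ zk] /= xz]] := Dx _ (ball_nbhs x r0).
have zn : z \in pts (s (n + k)%nat) by rewrite addnC; exact: pts_subset.
have [a an za] := pts_approx zn.
exists a => //; have := d_tri a z x; have := rad_gt0 (n + k)%nat.
by rewrite (d_sym a z) (d_sym z x); lra.
Qed.

Lemma pts_limit_point : D `<=` limit_point D.
Proof.
move=> z [k _ zk] U /dtop[e [e0 eU]].
have [N _ radN] := near_rad_lt e0.
have [_ _ partner _] := ref (k + N)%nat.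
have [q qk [qz zq]] := partner z (pts_subset N zk).
have := radN (k + N)%nat (leq_addl _ _); have := rad_gt0 (k + N)%nat => *.
exists q; split; [exact/eqP|by exists (k + N).+1|apply: eU; lra].
Qed.

Lemma near_rad_eq x y : \forall n \near \oo,
  forall a, d a x < rad (s n) -> d a y < rad (s n) -> x = y.
Proof.
have [->|/eqP xy] := eqVneq x y; first exact: nearW.
have dxy : 0 < d x y / 2 by have := d_gt0 xy; lra.
apply: filterS (near_rad_lt dxy) => n rn a ax ay; exfalso.
by have := d_tri x a y; rewrite (d_sym x a); lra.
Qed.

Lemma skew_closure : skew (closure D).
Proof.
move=> x y v w Dx Dy Dv Dw nxy nvw npair.
near \oo => n.
have [a an ax] := closure_approx n Dx; have [b bn bY] := closure_approx n Dy.
have [c cn cv] := closure_approx n Dv; have [e en ew] := closure_approx n Dw.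
have [_ _ _ robust] := adm n.
apply: (robust a an b bn c cn e en _ x y v w ax bY cv ew); split.
- by move=> ab; apply: nxy; rewrite -ab in bY; exact: (near (near_rad_eq x y) n _ a ax bY).
- by move=> ce; apply: nvw; rewrite -ce in ew; exact: (near (near_rad_eq v w) n _ c cv ew).
- move=> [[ac be]|[ae bc]]; apply: npair; [left|right]; split.
  + by rewrite -ac in cv; exact: (near (near_rad_eq x v) n _ a ax cv).
  + by rewrite -be in ew; exact: (near (near_rad_eq y w) n _ b bY ew).
  + by rewrite -ae in ew; exact: (near (near_rad_eq x w) n _ a ax ew).
  + by rewrite -bc in cv; exact: (near (near_rad_eq y v) n _ b bY cv).
Unshelve. all: by end_near.
Qed.

Lemma closure_pts_subset : closure D `<=` P.
Proof.
rewrite [X in _ `<=` X]((closure_id P).1 HP.1).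
by apply: closureS => z [n _]; have [+ _ _ _] := adm n; apply.
Qed.

End Limit.

End MetricGroup.

End MetricSpace.

Theorem lemma3p4 (G : topologicalType) (add : G -> G -> G) (opp : G -> G) (zero : G)
    (HG : is_topological_group add opp zero) (HPolish : polish_space G)
    (P : set G) (HP : perfect_set P) (HPne : P !=set0) :
  exists Q : set G, Q `<=` P /\ perfect_set Q /\ Q !=set0 /\ skew_set add opp Q.
Proof.
have [_ [d [dm [dtop _]]]] := HPolish.
have [p0 Pp0] := HPne.
have [s [s0 adm ref]] := exists_refining_chain dm dtop HG HP Pp0.
exists (closure (\bigcup_n [set` pts (s n)])); split; [|split; [|split]].
- exact: closure_pts_subset.
- apply: perfect_closure; exact: pts_limit_point.
- by exists p0; apply: subset_closure; exists 0%nat.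
- exact: (skew_closure dm dtop adm ref).
Qed.
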